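(* Let $\mathcal{X}$ be any fuzzy random variable with values in $\mathcal{F}_c(\mathbb{R})$. Then $\mathrm{Med}_s(\mathcal{X})=\mathrm{Med}(\mathcal{X};D_{FT})$.
   Context: $\mathcal{F}_c(\mathbb{R})$ is the set of functions $A:\mathbb{R}\to[0,1]$ whose $\alpha$-levels $A_\alpha=\{x:A(x)\ge\alpha\}$ ($\alpha\in(0,1]$) and $A_0=\overline{\{x:A(x)>0\}}$ are non-empty compact intervals. Support function: $s_A(u,\alpha)=\sup\{uv:v\in A_\alpha\}$, $u\in\{-1,1\}$, $\alpha\in[0,1]$. A fuzzy random variable on $(\Omega,\mathcal{A},\mathbb{P})$ is a map $\mathcal{X}:\Omega\to\mathcal{F}_c(\mathbb{R})$ with each $\omega\mapsto\mathcal{X}(\omega)_\alpha$ a random compact set; $s_{\mathcal{X}}(u,\alpha)(\omega)=s_{\mathcal{X}(\omega)}(u,\alpha)$ is then a real random variable. For a real random variable $X$, $\mathrm{Med}(X)$ is the set of all its medians. $\mathrm{Med}_s(\mathcal{X})$ is the set of $A\in\mathcal{F}_c(\mathbb{R})$ with $s_A(u,\alpha)\in\mathrm{Med}(s_{\mathcal{X}}(u,\alpha))$ for all $u\in\{-1,1\}$, $\alpha\in[0,1]$. The fuzzy Tukey depth is $D_{FT}(A;\mathcal{X})=\inf_{u\in\{-1,1\},\alpha\in[0,1]}\min\big(\mathbb{P}[s_{\mathcal{X}}(u,\alpha)\le s_A(u,\alpha)],\ \mathbb{P}[s_{\mathcal{X}}(u,\alpha)\ge s_A(u,\alpha)]\big)$,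 and $\mathrm{Med}(\mathcal{X};D_{FT})=\{A\in\mathcal{F}_c(\mathbb{R}):D_{FT}(A;\mathcal{X})=\max_{U\in\mathcal{F}_c(\mathbb{R})}D_{FT}(U;\mathcal{X})\}$. *)

From HB Require Import structures.
From mathcomp Require Import all_boot all_order all_algebra.
From mathcomp Require Import all_classical all_reals all_analysis.
Set Implicit Arguments. Unset Strict Implicit. Unset Printing Implicit Defensive.
Import Order.TTheory GRing.Theory Num.Theory.
Import numFieldNormedType.Exports.
Local Open Scope classical_set_scope.
Local Open Scope ring_scope.

Section FuzzyDefs.
Context {R : realType}.

Definition alevel (A : R -> R) (a : R) : set R :=
  if 0 < a then [set x | a <= A x] else closure [set x | 0 < A x].

Definition isFc (A : R -> R) : Prop :=
  (forall x, 0 <= A x <= 1) /\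
  (forall a, 0 <= a <= 1 ->
     exists l r : R, l <= r /\ alevel A a = [set x | l <= x <= r]).

Definition suppf (A : R -> R) (u a : R) : R :=
  sup [set u * v | v in alevel A a].

Definition dirlev (u a : R) : Prop := (u = 1 \/ u = -1) /\ 0 <= a <= 1.

Context {d : measure_display} {Omega : measurableType d}.

(* Fuzzy random variable: values in F_c(R); each alpha-level is a random
   compact interval, i.e. its endpoints (equivalently s_X(1,.), s_X(-1,.))
   are real random variables. *)
Definition fuzzyRV (X : Omega -> R -> R) : Prop :=
  (forall w, isFc (X w)) /\
  (forall u a, dirlev u a -> measurable_fun setT (fun w => suppf (X w) u a)).

Variable P : probability Omega R.

Definition Med (Y : Omega -> R) : set R :=
  [set m | ((1/2)%:E <= P [set w | (Y w <= m)%R])%E /\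
          ((1/2)%:E <= P [set w | (m <= Y w)%R])%E].

Definition Med_s (X : Omega -> R -> R) : set (R -> R) :=
  [set A | isFc A /\
     forall u a, dirlev u a -> Med (fun w => suppf (X w) u a) (suppf A u a)].

Definition D_FT (A : R -> R) (X : Omega -> R -> R) : \bar R :=
  ereal_inf [set e | exists u a, dirlev u a /\
     e = Order.min (P [set w | suppf (X w) u a <= suppf A u a])
                   (P [set w | suppf (X w) u a >= suppf A u a])].

Definition Med_DFT (X : Omega -> R -> R) : set (R -> R) :=
  [set A | isFc A /\ forall U, isFc U -> (D_FT U X <= D_FT A X)%E].

End FuzzyDefs.

(* For a fuzzy set U, D_FT(U) >= 1/2 says exactly that every s_U(u, a) is a
   median of s_X(u, a), i.e. that U belongs to Med_s.  If D_FT(U) > 1/2, then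
   s_U(u, a) has both tail probabilities above 1/2, which pins it down to the
   value s_A(u, a) of any A in Med_s; so U and A have the same support function
   and the same depth.  Hence the elements of Med_s have maximal depth, and
   Med(X; D_FT) = Med_s as soon as Med_s is nonempty.
   A member M of Med_s is built level by level: taking for s_M(u, a) the
   largest median of s_X(u, a) yields nested intervals which are
   left-continuous in a (continuity of probability along monotone events),
   hence the a-levels, a > 0, of a fuzzy set.  Its 0-level, the closure of the
   union of the positive levels, has support function sup_a s_M(u, a), and this
   is again a median of s_X(u, 0) because s_X(u, a) increases to s_X(u, 0) as
   a decreases to 0. *)

From mathcomp Require Import all_boot all_order all_algebra.
From mathcomp Require Import all_classical all_reals all_analysis.
From mathcomp Require Import measurable_realfun lra.
Import Order.TTheory GRing.Theory Num.Theory.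
Import numFieldNormedType.Exports.
Local Open Scope classical_set_scope.
Local Open Scope ring_scope.

Section real_facts.
Context {R : realType}.

Lemma ler_of_gt_near {x y e : R} : 0 < e ->
  (forall t, y < t < y + e -> x <= t) -> x <= y.
Proof.
move=> e0 H; rewrite leNgt; apply/negP => yx.
have [xye|exy] := leP (x - y) e.
- have : y < y + (x - y) / 2 < y + e by apply/andP; split; lra.
  by move/H; lra.
- have : y < y + e / 2 < y + e by apply/andP; split; lra.
  by move/H; lra.
Qed.

Lemma ger_of_lt_near {x y e : R} : 0 < e ->
  (forall t, y - e < t < y -> t <= x) -> y <= x.
Proof.
move=> e0 H; rewrite -lerN2; apply: (ler_of_gt_near e0) => t /andP[yt te].
by rewrite lerNl; apply: H; apply/andP; split; lra.
Qed.

Lemma sup_max (S : set R) x : S x -> ubound S x -> sup S = x.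
Proof.
move=> Sx Sx_ub; apply/le_anti/andP; split; first by apply: ge_sup => //; exists x.
by apply: sup_upper_bound => //; split; exists x.
Qed.

Definition sup_levels (f : R -> R) : R := sup [set f a | a in [set a | 0 < a <= 1]].

End real_facts.

Section alevel_facts.
Context {R : realType}.
Implicit Types (A : R -> R) (a b l r x : R).

Lemma alevel_pos A a : 0 < a -> alevel A a = [set x | a <= A x].
Proof. by move=> a0; rewrite /alevel a0. Qed.

Lemma alevel0 A : alevel A 0 = closure [set x | 0 < A x].
Proof. by rewrite /alevel ltxx. Qed.

Lemma alevel_anti {A a b} : 0 <= a -> a <= b -> alevel A b `<=` alevel A a.
Proof.
move=> a0 ab x; have [a_gt0|a_le0] := ltP 0 a.
  by rewrite !alevel_pos ?(lt_le_trans a_gt0 ab) //=; apply: le_trans.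
have -> : a = 0 by apply/le_anti/andP.
have [b_gt0|b_le0] := ltP 0 b.
  by rewrite alevel_pos // alevel0 => bx; apply: subset_closure; apply: lt_le_trans bx.
by have -> : b = 0 by apply/le_anti; rewrite b_le0 (le_trans a0 ab).
Qed.

Lemma alevel_left {A a x} : 0 < a ->
  (forall b, 0 < b < a -> alevel A b x) -> alevel A a x.
Proof.
move=> a0 H; rewrite alevel_pos //=; apply: (ger_of_lt_near a0).
by move=> b; rewrite subrr => /[dup] /H + /andP[b0 _]; rewrite alevel_pos.
Qed.

Lemma suppf_itv {A a l r} : l <= r -> alevel A a = [set x | l <= x <= r] ->
  suppf A 1 a = r /\ suppf A (-1) a = - l.
Proof.
move=> lr Aa; rewrite /suppf Aa; split; apply: sup_max.
- by exists r; rewrite /= ?mul1r ?lexx ?lr.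
- by move=> _ [v /andP[_ vr] <-]; rewrite mul1r.
- by exists l; rewrite /= ?mulN1r ?lexx ?lr.
- by move=> _ [v /andP[lv _] <-]; rewrite mulN1r lerN2.
Qed.

End alevel_facts.

Section Fc_support.
Context {R : realType}.
Variable A : R -> R.
Hypothesis hA : isFc A.
Implicit Types (a b m u v x : R).

Lemma alevel_Fc {a} : 0 <= a <= 1 ->
  - suppf A (-1) a <= suppf A 1 a /\
  alevel A a = [set x | - suppf A (-1) a <= x <= suppf A 1 a].
Proof.
move=> a01; have [l [r [lr Aa]]] := hA.2 a a01.
by have [-> ->] := suppf_itv lr Aa; rewrite opprK.
Qed.

Lemma suppf_ub {u a v} : u = 1 \/ u = -1 -> 0 <= a <= 1 ->
  alevel A a v -> u * v <= suppf A u a.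
Proof.
move=> hu a01; have [_ ->] := alevel_Fc a01.
by case: hu => -> /andP[lv vr]; rewrite ?mul1r ?mulN1r // lerNl.
Qed.

Lemma suppf_attained {u a} : u = 1 \/ u = -1 -> 0 <= a <= 1 ->
  exists2 v, alevel A a v & u * v = suppf A u a.
Proof.
move=> hu a01; have [lr ->] := alevel_Fc a01.
case: hu => ->; [exists (suppf A 1 a)|exists (- suppf A (-1) a)];
  by rewrite /= ?lexx ?lr ?mul1r ?mulN1r ?opprK.
Qed.

Lemma suppf_anti {u a b} : u = 1 \/ u = -1 -> 0 <= a -> a <= b -> b <= 1 ->
  suppf A u b <= suppf A u a.
Proof.
move=> hu a0 ab b1; have b01 : 0 <= b <= 1 by rewrite b1 (le_trans a0 ab).
have [v Abv <-] := suppf_attained hu b01.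
by apply: suppf_ub hu _ (alevel_anti a0 ab _ Abv); rewrite a0 (le_trans ab b1).
Qed.

Lemma suppf_left {u a x} : u = 1 \/ u = -1 -> 0 < a <= 1 ->
  (forall b, 0 < b < a -> x <= suppf A u b) -> x <= suppf A u a.
Proof.
move=> hu /andP[a0 a1] H; have a01 : 0 <= a <= 1 by rewrite ltW.
have [v0 Aav0 v0E] := suppf_attained hu a01.
rewrite leNgt; apply/negP; rewrite -v0E => v0x.
have uu : u * u = 1 by case: hu => ->; rewrite ?mulN1r ?opprK ?mulr1.
(* The point [u * x] lies between [v0] and a maximiser at every level [b < a]. *)
suff /(suppf_ub hu a01) : alevel A a (u * x) by rewrite mulrA uu mul1r -v0E; lra.
apply: alevel_left => // b /[dup] /andP[b0 ba] /H xb.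
have b01 : 0 <= b <= 1 by rewrite ltW //= (le_trans (ltW ba) a1).
have [vb Abvb vbE] := suppf_attained hu b01.
have Abv0 : alevel A b v0 by apply: alevel_anti Aav0; rewrite ?ltW.
have [_ Ab] := alevel_Fc b01; rewrite Ab /= in Abvb Abv0 *.
case/andP: Abvb => ? ?; case/andP: Abv0 => ? ?.
by case: hu v0x xb vbE => ->; rewrite ?mul1r ?mulN1r => *; apply/andP; split; lra.
Qed.

Lemma suppf_closure {u m} : u = 1 \/ u = -1 ->
  m < suppf A u 0 -> exists2 a, 0 < a <= 1 & m < suppf A u a.
Proof.
have a01 : 0 <= (0 : R) <= 1 by rewrite lexx ler01.
move=> hu; have [v] := suppf_attained hu a01; rewrite alevel0 => clv <- mv.
have [z [/= Az0 vz]] := clv _ (nbhsx_ballx v (u * v - m) ltac:(lra)).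
exists (A z); first by rewrite Az0; case/andP: (hA.1 z).
apply: lt_le_trans (suppf_ub hu _ _); last by rewrite alevel_pos //=.
  move: vz; rewrite -ball_normE /ball_ /= ltr_norml.
  by case: hu => -> /=; lra.
by rewrite ltW //; case/andP: (hA.1 z).
Qed.

End Fc_support.

Section fuzzy_of_levels.
Context {R : realType}.
(* [s u a] prescribes the support function in direction [u] of the [a]-level. *)
Variable s : R -> R -> R.
Hypothesis s_anti : forall {u a b}, u = 1 \/ u = -1 -> 0 < a -> a <= b -> b <= 1 ->
  s u b <= s u a.
Hypothesis s_left : forall {u a x}, u = 1 \/ u = -1 -> 0 < a <= 1 ->
  (forall b, 0 < b < a -> x <= s u b) -> x <= s u a.
Hypothesis s_nonempty : forall {a}, 0 < a <= 1 -> - s (-1) a <= s 1 a.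
Hypothesis s_bounded : forall u, u = 1 \/ u = -1 ->
  has_ubound [set s u a | a in [set a | 0 < a <= 1]].

Definition level_set a : set R := [set x | - s (-1) a <= x <= s 1 a].

Definition fuzzy_of_levels x : R :=
  sup [set a | a = 0 \/ 0 < a <= 1 /\ level_set a x].

Local Notation M := fuzzy_of_levels.
Let u1 : (1 : R) = 1 \/ (1 : R) = -1 := or_introl erefl.
Let um1 : (-1 : R) = 1 \/ (-1 : R) = -1 := or_intror erefl.

Lemma level_set_anti {a b} : 0 < a -> a <= b -> b <= 1 -> level_set b `<=` level_set a.
Proof.
move=> a0 ab b1 x /andP[lx xr].
have := s_anti u1 a0 ab b1; have := s_anti um1 a0 ab b1.
by move=> *; apply/andP; split; lra.
Qed.

Let has_sup_levels x : has_sup [set a | a = 0 \/ 0 < a <= 1 /\ level_set a x].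
Proof. by split; [exists 0; left|exists 1 => a [->|[/andP[_ a1] _]] //; exact: ler01]. Qed.

Lemma fuzzy_of_levels_01 x : 0 <= M x <= 1.
Proof.
have [ne _] := has_sup_levels x.
apply/andP; split; first by apply: sup_upper_bound; [exact: has_sup_levels|left].
by apply: ge_sup => // a [->|[/andP[_ a1] _]] //; exact: ler01.
Qed.

Lemma fuzzy_of_levels_ge {a x} : 0 < a <= 1 -> a <= M x <-> level_set a x.
Proof.
move=> /[dup] a01 /andP[a0 a1]; split; last first.
  by move=> ax; apply: sup_upper_bound; [exact: has_sup_levels|right].
move=> aM; have lev_b b : 0 < b < a -> level_set b x.
  move=> /andP[b0 ba]; have [ne _] := has_sup_levels x.
  have [c [->|[/andP[c0 c1] cx]] bc] := sup_gt ne (lt_le_trans ba aM); first lra.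
  exact: level_set_anti b0 (ltW bc) c1 _ cx.
apply/andP; split.
- rewrite lerNl; apply: s_left um1 a01 _ => b /lev_b /andP[+ _]; by rewrite lerNl.
- by apply: s_left u1 a01 _ => b /lev_b /andP[].
Qed.

Lemma fuzzy_of_levels_gt0 x : 0 < M x <-> exists2 a, 0 < a <= 1 & level_set a x.
Proof.
split=> [Mx_gt0|[a a01 ax]].
  have Mx01 : 0 < M x <= 1 by rewrite Mx_gt0; case/andP: (fuzzy_of_levels_01 x).
  by exists (M x) => //; apply/(fuzzy_of_levels_ge Mx01).
by case/andP: (a01) => a0 _; apply: lt_le_trans a0 _; apply/(fuzzy_of_levels_ge a01).
Qed.

Lemma alevel_fuzzy_of_levels {a} : 0 < a <= 1 -> alevel M a = level_set a.
Proof.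
move=> /[dup] a01 /andP[a0 _]; rewrite alevel_pos //.
by apply/seteqP; split => x /(fuzzy_of_levels_ge a01).
Qed.

Lemma sup_levels_ub {u a} : u = 1 \/ u = -1 -> 0 < a <= 1 -> s u a <= sup_levels (s u).
Proof.
move=> hu a01; apply: sup_upper_bound; last by exists a.
by split; [exists (s u a), a|exact: s_bounded].
Qed.

Let sup_levels_nonempty : - sup_levels (s (-1)) <= sup_levels (s 1).
Proof.
have a01 : 0 < (1 : R) <= 1 by rewrite ltr01 lexx.
by have := sup_levels_ub um1 a01; have := sup_levels_ub u1 a01; have := s_nonempty a01; lra.
Qed.

Lemma alevel0_fuzzy_of_levels :
  alevel M 0 = [set x | - sup_levels (s (-1)) <= x <= sup_levels (s 1)].
Proof.
have has_sup_s u : u = 1 \/ u = -1 -> has_sup [set s u a | a in [set a | 0 < a <= 1]].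
  by move=> hu; split; [exists (s u 1), 1; rewrite /= ?ltr01 ?lexx|exact: s_bounded].
rewrite alevel0 (_ : [set x | 0 < M x] = [set x | exists2 a, 0 < a <= 1 & level_set a x]);
  last by apply/seteqP; split => x /fuzzy_of_levels_gt0.
apply/seteqP; split => x.
  have sub : [set x | exists2 a, 0 < a <= 1 & level_set a x] `<=`
      [set` `[- sup_levels (s (-1)), sup_levels (s 1)]].
    move=> y [a a01 /andP[ly yr]]; rewrite /= in_itv /=.
    have := sup_levels_ub um1 a01; have := sup_levels_ub u1 a01.
    by move=> *; apply/andP; split; lra.
  by move=> /(closureS sub) /itv_closed /=; rewrite in_itv.
move=> /andP[lx xr] B /nbhs_ballP [e /= e0 eB].
have [_ [a1 /andP[a1_gt0 a1_le1] <-] a1_gt] := sup_adherent e0 (has_sup_s _ u1).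
have [_ [a2 /andP[a2_gt0 a2_le1] <-] a2_gt] := sup_adherent e0 (has_sup_s _ um1).
have [c c01 [ca1 ca2]] : exists2 c, 0 < c <= 1 & c <= a1 /\ c <= a2.
  by case: (leP a1 a2) => a12; [exists a1|exists a2]; rewrite ?lexx ?a1_gt0 ?a2_gt0 // ltW.
have [c0 _] := andP c01.
have := s_anti u1 c0 ca1 a1_le1; have := s_anti um1 c0 ca2 a2_le1.
have := s_nonempty c01; rewrite /sup_levels in lx xr a1_gt a2_gt => *.
have [z cz xz] : exists2 z, level_set c z & `|x - z| < e.
  have [xl|lx'] := ltP x (- s (-1) c).
    by exists (- s (-1) c); rewrite /level_set /= ?ltr_norml; apply/andP; split; lra.
  have [xr'|rx] := ltP (s 1 c) x.
    by exists (s 1 c); rewrite /level_set /= ?ltr_norml; apply/andP; split; lra.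
  by exists x; rewrite /level_set /= ?lx' ?rx // subrr normr0.
exists z; split; first by exists c.
by apply: eB; rewrite -ball_normE /ball_ /=.
Qed.

Lemma isFc_fuzzy_of_levels : isFc M.
Proof.
split=> [|a /andP[a0 a1]]; first exact: fuzzy_of_levels_01.
have [a_gt0|a_le0] := ltP 0 a.
  have a01 : 0 < a <= 1 by rewrite a_gt0.
  by exists (- s (-1) a), (s 1 a); rewrite s_nonempty // alevel_fuzzy_of_levels.
have -> : a = 0 by apply/le_anti/andP.
by exists (- sup_levels (s (-1))), (sup_levels (s 1)); rewrite alevel0_fuzzy_of_levels.
Qed.

Lemma suppf_fuzzy_of_levels {u a} : u = 1 \/ u = -1 -> 0 <= a <= 1 ->
  suppf M u a = if 0 < a then s u a else sup_levels (s u).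
Proof.
move=> hu /andP[a0 a1]; have [a_gt0|a_le0] := ltP 0 a.
  have a01 : 0 < a <= 1 by rewrite a_gt0.
  have [M1 Mm1] := suppf_itv (s_nonempty a01) (alevel_fuzzy_of_levels a01).
  by case: hu => ->; rewrite ?M1 ?Mm1 ?opprK.
have -> : a = 0 by apply/le_anti/andP.
have [M1 Mm1] := suppf_itv sup_levels_nonempty alevel0_fuzzy_of_levels.
by case: hu => ->; rewrite ?ltxx ?M1 ?Mm1 ?opprK.
Qed.

End fuzzy_of_levels.

Section measurable_comparison.
Context {R : realType} {d : measure_display} {Omega : measurableType d}.
Implicit Types (Y Z : Omega -> R).

Lemma measurable_ler {Y Z} : measurable_fun setT Y -> measurable_fun setT Z ->
  measurable [set w | Y w <= Z w].
Proof.
move=> mY mZ; rewrite (_ : [set w | _] = setT `&` (Y \- Z) @^-1` `]-oo, 0]).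
  exact: measurable_funB mY mZ measurableT _ (measurable_itv _).
by apply/seteqP; split => w /=; rewrite in_itv /= subr_le0 // => -[].
Qed.

Lemma measurable_ltr {Y Z} : measurable_fun setT Y -> measurable_fun setT Z ->
  measurable [set w | Y w < Z w].
Proof.
move=> mY mZ; rewrite (_ : [set w | _] = setT `&` (Y \- Z) @^-1` `]-oo, 0[).
  exact: measurable_funB mY mZ measurableT _ (measurable_itv _).
by apply/seteqP; split => w /=; rewrite in_itv /= subr_lt0 // => -[].
Qed.

End measurable_comparison.

#[local] Hint Resolve measurable_ler measurable_ltr measurable_cst : core.

Section probability_facts.
Context {R : realType} {d : measure_display} {Omega : measurableType d}.
Variable P : probability Omega R.
Implicit Types (E F : set Omega) (Y Z : Omega -> R).

Definition pr E : R := fine (P E).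

Lemma prE E : measurable E -> P E = (pr E)%:E.
Proof. by move=> mE; rewrite /pr fineK // fin_num_measure. Qed.

Lemma le_pr {E F} : measurable E -> measurable F -> E `<=` F -> pr E <= pr F.
Proof. by move=> mE mF EF; rewrite -lee_fin -!prE //; apply: le_measure; rewrite ?inE. Qed.

Lemma pr_setC E : measurable E -> pr (~` E) = 1 - pr E.
Proof.
move=> mE; apply: EFin_inj.
by rewrite EFinB -prE ?probability_setC -?prE //; exact: measurableC.
Qed.

Lemma pr_bigcap_ge {c} {F : (set Omega)^nat} : (forall n, measurable (F n)) ->
  (forall n m, (n <= m)%N -> F m `<=` F n) -> (forall n, c <= pr (F n)) ->
  c <= pr (\bigcap_n F n).
Proof.
move=> mF F_anti cF; have mI : measurable (\bigcap_n F n) by exact: bigcapT_measurable.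
have F_cvg : (P \o F) n @[n --> \oo] --> P (\bigcap_n F n).
  apply: nonincreasing_cvg_mu => //.
    exact: le_lt_trans (probability_le1 P (mF 0%N)) (ltry 1).
  by move=> n m nm; apply/subsetPset; exact: F_anti.
rewrite -lee_fin -prE // -(cvg_lim _ F_cvg) //.
apply: lime_ge; first by apply/cvg_ex; exists (P (\bigcap_n F n)).
by apply: nearW => n /=; rewrite prE // lee_fin.
Qed.

Lemma pr_ge_right_limit {t0 t1 c} {E : R -> set Omega} {F} : t0 < t1 ->
  (forall t, t0 < t < t1 -> measurable (E t) /\ c <= pr (E t)) ->
  (forall s t, t0 < s -> s <= t -> t < t1 -> E s `<=` E t) ->
  measurable F -> (forall w, (forall t, t0 < t < t1 -> E t w) -> F w) ->
  c <= pr F.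
Proof.
move=> t01 hE E_mono mF EF; have t01' : 0 < t1 - t0 by rewrite subr_gt0.
pose t_ n : R := t0 + (t1 - t0) / n.+2%:R.
have t_in n : t0 < t_ n < t1.
  rewrite /t_ ltrDl divr_gt0 ?ltr0n //= -ltrBrDl ltr_pdivrMr ?ltr0n //.
  by rewrite ltr_pMr // ltr1n.
have t_anti n m : (n <= m)%N -> t_ m <= t_ n.
  by move=> nm; rewrite lerD2l ler_pM2l // lef_pV2 ?posrE ?ltr0n // ler_nat !ltnS.
have mEt n : measurable (E (t_ n)) by have [] := hE _ (t_in n).
apply: le_trans (pr_bigcap_ge mEt _ (fun n => (hE _ (t_in n)).2)) (le_pr _ mF _).
- move=> n m nm; apply: E_mono (t_anti _ _ nm) _; first by case/andP: (t_in m).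
  by case/andP: (t_in n).
- exact: bigcapT_measurable.
move=> w Ew; apply: EF => t /andP[t0t tt1].
pose n := Num.Def.archi_bound ((t1 - t0) / (t - t0)).
have t_le : t_ n <= t.
  have tt0 : 0 < t - t0 by rewrite subr_gt0.
  have := archi_boundP (divr_ge0 (ltW t01') (ltW tt0)).
  rewrite -/n ltr_pdivrMr ?subr_gt0 // => /ltW t01_le.
  rewrite /t_ -lerBrDl ler_pdivrMr ?ltr0n // mulrC.
  by apply: le_trans t01_le _; rewrite ler_pM2r // ler_nat leqW.
by apply: E_mono t_le tt1 _ (Ew n I); case/andP: (t_in n).
Qed.

Lemma pr_ge_left_limit {t0 t1 c} {E : R -> set Omega} {F} : t0 < t1 ->
  (forall t, t0 < t < t1 -> measurable (E t) /\ c <= pr (E t)) ->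
  (forall s t, t0 < s -> s <= t -> t < t1 -> E t `<=` E s) ->
  measurable F -> (forall w, (forall t, t0 < t < t1 -> E t w) -> F w) ->
  c <= pr F.
Proof.
move=> t01 hE E_mono mF EF.
have flip t : (- t1 < t < - t0) = (t0 < - t < t1) by rewrite andbC ltrNl ltrNr.
apply: (pr_ge_right_limit (t0 := - t1) (t1 := - t0) (E := fun t => E (- t)) (F := F)) => //.
- by rewrite ltrN2.
- by move=> t; rewrite flip => /hE.
- move=> s t s0 st t1'.
  by apply: E_mono; [rewrite ltrNr|rewrite lerN2|rewrite ltrNl].
- by move=> w Ew; apply: EF => t tt; rewrite -[t]opprK; apply: Ew; rewrite flip opprK.
Qed.

Lemma cdf_right_closed {Y m c} : measurable_fun setT Y ->
  (forall t, m < t -> c <= pr [set w | Y w <= t]) -> c <= pr [set w | Y w <= m].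
Proof.
move=> mY H; apply: (pr_ge_right_limit (t0 := m) (t1 := m + 1)
  (E := fun t => [set w | Y w <= t])).
- by rewrite ltrDl.
- by move=> t /andP[mt _]; split; [auto|exact: H].
- by move=> s t _ st _ w /= /le_trans; apply.
- by auto.
- by move=> w Yw; apply: (ler_of_gt_near ltr01) => t /Yw.
Qed.

Lemma ccdf_left_closed {Y m c} : measurable_fun setT Y ->
  (forall t, t < m -> c <= pr [set w | t <= Y w]) -> c <= pr [set w | m <= Y w].
Proof.
move=> mY H; apply: (pr_ge_left_limit (t0 := m - 1) (t1 := m)
  (E := fun t => [set w | t <= Y w])).
- by rewrite gtrBl.
- by move=> t /andP[_ tm]; split; [auto|exact: H].
- by move=> s t _ st _ w /=; apply: le_trans.
- by auto.
- by move=> w Yw; apply: (ger_of_lt_near ltr01) => t /Yw.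
Qed.

Lemma pr_ltr {Y} t : measurable_fun setT Y ->
  pr [set w | Y w < t] = 1 - pr [set w | t <= Y w].
Proof.
move=> mY; rewrite -pr_setC; last by auto.
by congr pr; apply/seteqP; split => w /=; rewrite ltNge => /negP.
Qed.

Lemma pr_gtr {Y} t : measurable_fun setT Y ->
  pr [set w | t < Y w] = 1 - pr [set w | Y w <= t].
Proof.
move=> mY; rewrite -pr_setC; last by auto.
by congr pr; apply/seteqP; split => w /=; rewrite ltNge => /negP.
Qed.

Lemma pr_ler_small {Y c} : measurable_fun setT Y -> 0 < c ->
  exists b, pr [set w | Y w <= b] < c.
Proof.
move=> mY c0; apply/not_existsP => small.
have cF n : c <= pr [set w | Y w <= - n%:R] by rewrite leNgt; apply/negP/small.
have mF n : measurable [set w | Y w <= - n%:R] by auto.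
have F_anti n m : (n <= m)%N -> [set w | Y w <= - m%:R] `<=` [set w | Y w <= - n%:R].
  by move=> nm w /= /le_trans; apply; rewrite lerN2 ler_nat.
have := pr_bigcap_ge mF F_anti cF.
rewrite (_ : \bigcap_n _ = set0) ?/pr ?measure0 /=; first lra.
apply/seteqP; split => // w /(_ (Num.Def.archi_bound `|Y w|) I) /=.
have := archi_boundP (normr_ge0 (Y w)); rewrite ltr_norml => /andP[+ _].
by move=> /[swap] /le_lt_trans /[apply]; rewrite ltxx.
Qed.

Definition max_median Y : R := sup [set x | 1/2 <= pr [set w | x <= Y w]].

Lemma has_sup_max_median {Y} : measurable_fun setT Y ->
  has_sup [set x | 1/2 <= pr [set w | x <= Y w]].
Proof.
have half_gt0 : 0 < (1 / 2 : R) by lra.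
move=> mY; split.
  have [b Yb] := pr_ler_small mY half_gt0.
  exists b => /=; have := pr_gtr b mY.
  have : pr [set w | b < Y w] <= pr [set w | b <= Y w].
    by apply: le_pr; [auto..|move=> w /= /ltW].
  lra.
have [b Yb] := pr_ler_small (measurable_funN mY) half_gt0.
exists (- b) => x /= Yx; rewrite leNgt; apply/negP => bx.
have : pr [set w | x <= Y w] <= pr [set w | - Y w <= b].
  apply: le_pr; [exact: measurable_ler (measurable_cst _) mY|
    exact: measurable_ler (measurable_funN mY) (measurable_cst _)|].
  by move=> w /=; lra.
lra.
Qed.

Lemma max_medianP {Y x} : measurable_fun setT Y ->
  1/2 <= pr [set w | x <= Y w] <-> x <= max_median Y.
Proof.
move=> mY; have [ne ub] := has_sup_max_median mY.
split; first exact: sup_upper_bound.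
move=> x_le; suff : 1/2 <= pr [set w | max_median Y <= Y w].
  move/le_trans; apply; apply: le_pr; [auto..|].
  by move=> w /=; apply: le_trans.
apply: (ccdf_left_closed mY) => t /(sup_gt ne) [y Hy ty].
apply: le_trans Hy _; apply: le_pr; [auto..|].
by move=> w /=; apply: le_trans (ltW ty).
Qed.

Lemma MedE {Y m} : measurable_fun setT Y ->
  Med P Y m <-> 1/2 <= pr [set w | Y w <= m] /\ 1/2 <= pr [set w | m <= Y w].
Proof.
by move=> mY; rewrite /Med /= !prE ?lee_fin //; auto.
Qed.

Lemma Med_max_median {Y} : measurable_fun setT Y -> Med P Y (max_median Y).
Proof.
move=> mY; apply/MedE => //; split; last exact/max_medianP.
apply: (cdf_right_closed mY) => t mt.
have : pr [set w | t <= Y w] < 1/2.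
  by rewrite ltNge; apply/negP => /(max_medianP mY); rewrite leNgt mt.
have : pr [set w | Y w < t] <= pr [set w | Y w <= t].
  by apply: le_pr; [auto..|move=> w /= /ltW].
rewrite pr_ltr //; lra.
Qed.

Lemma max_median_le {Y Z} : measurable_fun setT Y -> measurable_fun setT Z ->
  (forall w, Y w <= Z w) -> max_median Y <= max_median Z.
Proof.
move=> mY mZ YZ; apply/max_medianP => //.
apply: le_trans ((max_medianP mY).2 (lexx _)) _.
by apply: le_pr; [auto..|move=> w /= /le_trans; apply].
Qed.

Lemma max_median_opp_le {Y Z} : measurable_fun setT Y -> measurable_fun setT Z ->
  (forall w, - Y w <= Z w) -> - max_median Y <= max_median Z.
Proof.
move=> mY mZ YZ; apply/max_medianP => //.
have [+ _] := (MedE mY).1 (Med_max_median mY); move/le_trans; apply.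
apply: le_pr; [auto..|move=> w /= Yw].
by apply: le_trans (YZ w); rewrite lerN2.
Qed.

Lemma Med_eq {Y m t} : measurable_fun setT Y -> Med P Y m ->
  ((1/2)%:E < P [set w | (Y w <= t)%R])%E ->
  ((1/2)%:E < P [set w | (t <= Y w)%R])%E ->
  t = m.
Proof.
move=> mY /(MedE mY) [m1 m2].
rewrite !prE ?lte_fin; [move=> t1 t2|auto..].
apply/le_anti/andP; split; rewrite leNgt; apply/negP => lt.
- have : pr [set w | t <= Y w] <= pr [set w | m < Y w].
    by apply: le_pr; [auto..|move=> w /=; apply: lt_le_trans].
  rewrite pr_gtr //; lra.
- have : pr [set w | Y w <= t] <= pr [set w | Y w < m].
    by apply: le_pr; [auto..|move=> w /= /le_lt_trans; apply].
  rewrite pr_ltr //; lra.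
Qed.

End probability_facts.

Section max_median_family.
Context {R : realType} {d : measure_display} {Omega : measurableType d}.
Variables (P : probability Omega R) (Y : R -> Omega -> R).
Hypothesis mY : forall a, 0 <= a <= 1 -> measurable_fun setT (Y a).
Hypothesis Y_anti : forall a b w, 0 <= a -> a <= b -> b <= 1 -> Y b w <= Y a w.
Hypothesis Y_left : forall a x w, 0 < a <= 1 ->
  (forall b, 0 < b < a -> x <= Y b w) -> x <= Y a w.
Hypothesis Y_0 : forall m w, m < Y 0 w -> exists2 a, 0 < a <= 1 & m < Y a w.

Lemma max_median_anti a b : 0 <= a -> a <= b -> b <= 1 ->
  max_median P (Y b) <= max_median P (Y a).
Proof.
move=> a0 ab b1; apply: max_median_le; last by move=> w; exact: Y_anti.
  by apply: mY; rewrite b1 (le_trans a0 ab).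
by apply: mY; rewrite a0 (le_trans ab b1).
Qed.

Lemma max_median_left a x : 0 < a <= 1 ->
  (forall b, 0 < b < a -> x <= max_median P (Y b)) -> x <= max_median P (Y a).
Proof.
move=> /[dup] a01 /andP[a0 a1] H.
have mYb b : 0 < b <= a -> measurable_fun setT (Y b).
  by move=> /andP[b0 ba]; apply: mY; rewrite ltW //= (le_trans ba a1).
have mYa : measurable_fun setT (Y a) by apply: mYb; rewrite a0 lexx.
apply/(max_medianP P mYa).
apply: (pr_ge_left_limit P (t0 := 0) (t1 := a) (E := fun b => [set w | x <= Y b w])
  (F := [set w | x <= Y a w])) => //.
- move=> b /[dup] /andP[b0 /ltW ba] /H xb; have hb : 0 < b <= a by rewrite b0.
  by split; [auto|exact/(max_medianP P (mYb _ hb))].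
- move=> s t s0 st ta w /= /le_trans; apply.
  by apply: Y_anti (ltW s0) st (le_trans (ltW ta) a1).
- by auto.
- by move=> w Hw; apply: Y_left.
Qed.

Lemma Med_sup_levels_max_median :
  Med P (Y 0) (sup_levels (fun a => max_median P (Y a))).
Proof.
set S := sup_levels _.
have mY0 : measurable_fun setT (Y 0) by apply: mY; rewrite lexx ler01.
have mYa a : 0 < a <= 1 -> measurable_fun setT (Y a).
  by move=> /andP[a0 a1]; apply: mY; rewrite ltW.
have hS : has_sup [set max_median P (Y a) | a in [set a | 0 < a <= 1]].
  split; first by exists (max_median P (Y 1)), 1; rewrite /= ?ltr01 ?lexx.
  exists (max_median P (Y 0)) => _ [a /andP[a0 a1] <-].
  exact: max_median_anti (ltW a0) a1.
have le_S a : 0 < a <= 1 -> max_median P (Y a) <= S.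
  by move=> a01; apply: (sup_upper_bound hS); exists a.
apply/(MedE P mY0); split.
- apply: (cdf_right_closed P mY0) => t St.
  apply: (pr_ge_right_limit P (t0 := 0) (t1 := 1) (E := fun a => [set w | Y a w < t])) => //.
  + move=> a /andP[a0 a1]; have a01 : 0 < a <= 1 by rewrite a0 ltW.
    split; first by auto.
    have : pr P [set w | t <= Y a w] < 1/2.
      rewrite ltNge; apply/negP => /(max_medianP P (mYa _ a01)) ta.
      by have := lt_le_trans St (le_trans ta (le_S _ a01)); rewrite ltxx.
    rewrite pr_ltr; [lra|exact: mYa].
  + move=> s b s0 sb b1 w /=; apply: le_lt_trans.
    exact: Y_anti (ltW s0) sb (ltW b1).
  + by auto.
  + move=> w Hw /=; rewrite leNgt; apply/negP => /Y_0 [a /andP[a0 a1] ta].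
    have a2 : 0 < a / 2 < 1 by apply/andP; split; lra.
    have /= := Hw _ a2; have : Y a w <= Y (a / 2) w by apply: Y_anti; lra.
    lra.
- apply: (ccdf_left_closed P mY0) => t /(sup_gt hS.1) [_ [a /[dup] a01 /andP[a0 a1] <-] ta].
  apply: le_trans ((max_medianP P (mYa _ a01)).2 (ltW ta)) _.
  apply: le_pr; [auto..|].
  by move=> w /= /le_trans; apply; exact: Y_anti (lexx 0) (ltW a0) a1.
Qed.

End max_median_family.

Section fuzzy_median.
Context {R : realType} {d : measure_display} {Omega : measurableType d}.
Variables (P : probability Omega R) (X : Omega -> R -> R).
Hypothesis hX : fuzzyRV X.

Let S u a w := suppf (X w) u a.

Let mS {u} : u = 1 \/ u = -1 -> forall a, 0 <= a <= 1 -> measurable_fun setT (S u a).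
Proof. by move=> hu a a01; exact: hX.2. Qed.

Let S_anti {u} : u = 1 \/ u = -1 ->
  forall a b w, 0 <= a -> a <= b -> b <= 1 -> S u b w <= S u a w.
Proof. by move=> hu a b w; rewrite /S; exact: (suppf_anti (X w) (hX.1 w) hu). Qed.

Let S_left {u} : u = 1 \/ u = -1 -> forall a x w, 0 < a <= 1 ->
  (forall b, 0 < b < a -> x <= S u b w) -> x <= S u a w.
Proof. by move=> hu a x w; rewrite /S; exact: (suppf_left (X w) (hX.1 w) hu). Qed.

Let S_0 {u} : u = 1 \/ u = -1 ->
  forall m w, m < S u 0 w -> exists2 a, 0 < a <= 1 & m < S u a w.
Proof. by move=> hu m w; rewrite /S; exact: (suppf_closure (X w) (hX.1 w) hu). Qed.

Definition median_levels u a := max_median P (S u a).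

Definition fuzzy_median := fuzzy_of_levels median_levels.

Let levels_anti u a b : u = 1 \/ u = -1 -> 0 < a -> a <= b -> b <= 1 ->
  median_levels u b <= median_levels u a.
Proof. by move=> hu a0; exact: (max_median_anti P (S u) (mS hu) (S_anti hu) _ _ (ltW a0)). Qed.

Let levels_left u a x : u = 1 \/ u = -1 -> 0 < a <= 1 ->
  (forall b, 0 < b < a -> x <= median_levels u b) -> x <= median_levels u a.
Proof. by move=> hu; exact: (max_median_left P (S u) (mS hu) (S_anti hu) (S_left hu)). Qed.

Let levels_nonempty a : 0 < a <= 1 -> - median_levels (-1) a <= median_levels 1 a.
Proof.
move=> /andP[a0 a1]; have a01 : 0 <= a <= 1 by rewrite ltW.
apply: max_median_opp_le; [exact: mS (or_intror erefl) _ a01|exact: mS (or_introl erefl) _ a01|].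
by move=> w; have [] := alevel_Fc (X w) (hX.1 w) a01.
Qed.

Let levels_bounded u : u = 1 \/ u = -1 ->
  has_ubound [set median_levels u a | a in [set a | 0 < a <= 1]].
Proof.
move=> hu; exists (median_levels u 0) => _ [a /andP[a0 a1] <-].
exact: (max_median_anti P (S u) (mS hu) (S_anti hu) _ _ (lexx 0) (ltW a0) a1).
Qed.

Lemma Med_s_fuzzy_median : Med_s P X fuzzy_median.
Proof.
split; first exact: (isFc_fuzzy_of_levels median_levels levels_anti levels_left
  levels_nonempty levels_bounded).
move=> u a [hu /[dup] a01 /andP[a0 a1]].
rewrite (suppf_fuzzy_of_levels median_levels levels_anti levels_left levels_nonempty
  levels_bounded hu a01).
have [a_gt0|a_le0] := ltP 0 a; first exact: (Med_max_median P (mS hu _ a01)).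
have -> : a = 0 by apply/le_anti/andP.
exact: (Med_sup_levels_max_median P (S u) (mS hu) (S_anti hu) (S_0 hu)).
Qed.

End fuzzy_median.

Section depth.
Context {R : realType} {d : measure_display} {Omega : measurableType d}.
Variables (P : probability Omega R) (X : Omega -> R -> R).

Lemma D_FT_ge_half A : ((1/2)%:E <= D_FT P A X)%E <->
  forall u a, dirlev u a -> Med P (fun w => suppf (X w) u a) (suppf A u a).
Proof.
split=> [half_le u a hua|medA]; last first.
  apply: le_ereal_inf_tmp => _ [u [a [hua ->]]].
  by have [l r] := medA u a hua; rewrite le_min l r.
have : [set e | exists u a, dirlev u a /\ e = Order.min
    (P [set w | suppf (X w) u a <= suppf A u a])
    (P [set w | suppf (X w) u a >= suppf A u a])]
  (Order.min (P [set w | suppf (X w) u a <= suppf A u a])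
    (P [set w | suppf (X w) u a >= suppf A u a])) by exists u, a.
by move=> /ereal_inf_lbound /(le_trans half_le); rewrite le_min => /andP[].
Qed.

Hypothesis hX : fuzzyRV X.

Lemma D_FT_gt_half_suppf {A U u a} : Med_s P X A -> dirlev u a ->
  ((1/2)%:E < D_FT P U X)%E -> suppf U u a = suppf A u a.
Proof.
move=> [_ medA] hua.
have : [set e | exists u a, dirlev u a /\ e = Order.min
    (P [set w | suppf (X w) u a <= suppf U u a])
    (P [set w | suppf (X w) u a >= suppf U u a])]
  (Order.min (P [set w | suppf (X w) u a <= suppf U u a])
    (P [set w | suppf (X w) u a >= suppf U u a])) by exists u, a.
move=> /ereal_inf_lbound /[swap] /lt_le_trans /[apply]; rewrite lt_min => /andP[lo hi].
exact: Med_eq (hX.2 u a hua) (medA u a hua) lo hi.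
Qed.

Lemma D_FT_le_Med_s A U : Med_s P X A -> (D_FT P U X <= D_FT P A X)%E.
Proof.
move=> medA; have halfA := (D_FT_ge_half A).2 medA.2.
have [U_le|U_gt] := leP (D_FT P U X) (1/2)%:E; first exact: le_trans U_le halfA.
suff -> : D_FT P U X = D_FT P A X by [].
rewrite /D_FT; congr ereal_inf; apply/seteqP; split=> _ [u [a [hua ->]]];
  by exists u, a; rewrite (D_FT_gt_half_suppf medA hua U_gt).
Qed.

End depth.

Theorem theorem4p4 (R : realType) (d : measure_display) (Omega : measurableType d)
  (P : probability Omega R) (X : Omega -> R -> R) :
  fuzzyRV X -> Med_s P X = Med_DFT P X.
Proof.
move=> hX; apply/seteqP; split=> A.
  by move=> medA; split=> [|U _]; [exact: medA.1|exact: D_FT_le_Med_s].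
move=> [FcA A_deepest]; split=> //; apply/D_FT_ge_half.
have [FcM medM] := Med_s_fuzzy_median P X hX.
by apply: le_trans (A_deepest _ FcM); apply/D_FT_ge_half.
Qed.
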